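(* Let $k$ be a field and let $\mathcal C$ be a conilpotent coalgebra over $k$ such that the $k$-vector space $H^1(\mathcal C)$ is finite-dimensional. Then the forgetful functor from the category of left $\mathcal C$-contramodules to the category of left $\mathcal C^\vee$-modules, $\mathcal C\text{-contra}\to\mathcal C^\vee\text{-mod}$, is fully faithful. Moreover, for any dense subring $R$ of the topological ring $\mathcal C^\vee$, the forgetful functor $\mathcal C\text{-contra}\to R\text{-mod}$ is fully faithful.
   Context: A coalgebra $\mathcal C$ over $k$ is a vector space with coassociative comultiplication $\mu:\mathcal C\to\mathcal C\otimes_k\mathcal C$, $c\mapsto\sum c_{(1)}\otimes c_{(2)}$, and counit $\varepsilon:\mathcal C\to k$. It is coaugmented if endowed with a coalgebra morphism $\gamma:k\to\mathcal C$; then $\mathcal C_+=\mathcal C/\gamma(k)$ is a coalgebra without counit, and $\mathcal C$ is called conilpotent if for every $x\in\mathcal C_+$ some iterated comultiplication $\mathcal C_+\to\mathcal C_+^{\otimes m+1}$ annihilates $x$ (such a coaugmentation is then unique). One sets $H^1(\mathcal C)=\ker(\mathcal C_+\to\mathcal C_+\otimes_k\mathcal C_+)$ (the kernel of the induced comultiplication). A left $\mathcal C$-contramodule is a $k$-vector space $P$ with a linear map $\pi_P:\mathrm{Hom}_k(\mathcal C,P)\to P$ such that (contraassociativity) the two maps $\mathrm{Hom}_k(\mathcal C,\mathrm{Hom}_k(\mathcal C,P))\cong\mathrm{Hom}_k(\mathcal C\otimes_k\mathcal C,P)\rightrightarrows\mathrm{Hom}_k(\mathcal C,P)$, one induced by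 $\mu$ and the other by $\pi_P$, have equal compositions with $\pi_P$ (here $\mathrm{Hom}_k(V,\mathrm{Hom}_k(U,W))\cong\mathrm{Hom}_k(U\otimes_k V,W)$ is used), and (contraunitality) the composition $P\to\mathrm{Hom}_k(\mathcal C,P)\to P$ of the map induced by $\varepsilon$ with $\pi_P$ is the identity; morphisms are linear maps commuting with the contraactions. The dual vector space $\mathcal C^\vee=\mathrm{Hom}_k(\mathcal C,k)$ is an associative algebra with multiplication $(\phi\psi)(c)=\sum\psi(c_{(1)})\phi(c_{(2)})$, and every left $\mathcal C$-contramodule $P$ is a left $\mathcal C^\vee$-module via $\phi\cdot p=\pi_P(c\mapsto\phi(c)p)$; this defines the forgetful functor. $\mathcal C^\vee$ carries the (pseudo-compact) topology in which the annihilators of finite-dimensional subspaces of $\mathcal C$ form a base of neighborhoods of zero; a dense subring $R$ is a subring (containing the unit) dense in this topology, and $R$-modules structures on contramodules are obtained by restriction. *)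

(* MathComp has no tensor product of arbitrary vector spaces, so an element of
   C (x) C is represented by a finite list of pairs  [:: (a_1,b_1); ...]
   standing for  sum_i a_i (x) b_i ; equalities of tensors are expressed by
   testing against all multilinear forms (which separate points of a tensor
   product over a field). *)
From HB Require Import structures.
From mathcomp Require Import all_boot all_algebra.
Set Implicit Arguments. Unset Strict Implicit. Unset Printing Implicit Defensive.
Import GRing.Theory.
Local Open Scope ring_scope.

Definition islin (k : fieldType) (U V : lmodType k) (f : U -> V) : Prop :=
  forall (a : k) (x y : U), f (a *: x + y) = a *: f x + f y.

Definition lform (k : fieldType) (U : lmodType k) (f : U -> k) : Prop :=
  forall (a : k) (x y : U), f (a *: x + y) = a * f x + f y.

Definition bilin_form (k : fieldType) (C : lmodType k) (b : C -> C -> k) : Prop :=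
  (forall y, lform (fun x => b x y)) /\ (forall x, lform (b x)).

Definition trilin_form (k : fieldType) (C : lmodType k) (t : C -> C -> C -> k) : Prop :=
  [/\ forall y z, lform (fun x => t x y z),
      forall x z, lform (fun y => t x y z) &
      forall x y, lform (t x y)].

Definition tsum (C : Type) (V : nmodType) (s : seq (C * C)) (F : C -> C -> V) : V :=
  \sum_(ab <- s) F ab.1 ab.2.

Definition is_coalgebra (k : fieldType) (C : lmodType k)
    (mu : C -> seq (C * C)) (eps : C -> k) : Prop :=
  [/\ lform eps,
      (forall b, bilin_form b -> lform (fun c => tsum (mu c) b)),
      (forall t, trilin_form t -> forall c,
          tsum (mu c) (fun a b => tsum (mu a) (fun a' b' => t a' b' b))
        = tsum (mu c) (fun a b => tsum (mu b) (fun a' b' => t a a' b'))),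
      (forall c, tsum (mu c) (fun a b => eps a *: b) = c) &
      (forall c, tsum (mu c) (fun a b => eps b *: a) = c)].

(* gamma : k -> C, 1 |-> e, is a coalgebra morphism *)
Definition coaugmentation (k : fieldType) (C : lmodType k)
    (mu : C -> seq (C * C)) (eps : C -> k) (e : C) : Prop :=
  eps e = 1 /\ (forall b, bilin_form b -> tsum (mu e) b = b e e).

(* iterated comultiplication C -> C^{(x) m+1}, as a list of simple tensors
   (each a list of m+1 vectors) *)
Fixpoint iter_mu (k : fieldType) (C : lmodType k) (mu : C -> seq (C * C))
    (m : nat) (c : C) : seq (seq C) :=
  match m with
  | 0 => [:: [:: c]]
  | m'.+1 => flatten [seq (match l with
                          | y :: r => [seq [:: ab.1, ab.2 & r] | ab <- mu y]
                          | [::] => [::] end) | l <- iter_mu mu m' c]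
  end.

(* n-linear forms on C, given on lists of length n *)
Definition multilin_form (k : fieldType) (C : lmodType k) (n : nat) (t : seq C -> k) : Prop :=
  forall (l r : seq C), (size l + size r).+1 = n ->
    lform (fun x => t (l ++ x :: r)).

(* n-linear forms on C that descend to C_+ = C / k e (vanish when one argument is e) *)
Definition kills_e (k : fieldType) (C : lmodType k) (e : C) (n : nat) (t : seq C -> k) : Prop :=
  forall (l r : seq C), (size l + size r).+1 = n -> t (l ++ e :: r) = 0.

(* conilpotency: every x in C_+ is annihilated by some iterated comultiplication
   C_+ -> C_+^{(x) m+1} (the latter being the image of iter_mu under C -> C_+) *)
Definition conilpotent (k : fieldType) (C : lmodType k)
    (mu : C -> seq (C * C)) (e : C) : Prop :=
  forall x : C, exists m : nat, forall t : seq C -> k,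
    multilin_form m.+1 t -> kills_e e m.+1 t ->
    \sum_(l <- iter_mu mu m x) t l = 0.

(* x in C represents an element of H^1(C) = ker(C_+ -> C_+ (x) C_+) *)
Definition in_H1 (k : fieldType) (C : lmodType k)
    (mu : C -> seq (C * C)) (e : C) (x : C) : Prop :=
  forall b, bilin_form b -> (forall y, b e y = 0) -> (forall y, b y e = 0) ->
    tsum (mu x) b = 0.

(* H^1(C) is finite dimensional: spanned (modulo k e) by finitely many vectors *)
Definition H1_findim (k : fieldType) (C : lmodType k)
    (mu : C -> seq (C * C)) (e : C) : Prop :=
  exists s : seq C, forall x : C, in_H1 mu e x ->
    exists (lam : k) (a : nat -> k), x = lam *: e + \sum_(i < size s) a i *: s`_i.

(* left C-contramodule structure pi : Hom_k(C,P) -> P (only its values on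
   linear maps matter) *)
Definition is_contramodule (k : fieldType) (C : lmodType k)
    (mu : C -> seq (C * C)) (eps : C -> k) (P : lmodType k) (pi : (C -> P) -> P) : Prop :=
  [/\ (forall f g : C -> P, islin f -> islin g -> (forall c, f c = g c) -> pi f = pi g),
      (forall (a : k) (f g : C -> P), islin f -> islin g ->
          pi (fun c => a *: f c + g c) = a *: pi f + pi g),
      (* contraassociativity, g : C -> Hom_k(C,P) linear, corresponding to
         h : C (x) C -> P, h (u (x) v) = g v u *)
      (forall g : C -> C -> P, (forall v, islin (g v)) ->
          (forall (a : k) x y c, g (a *: x + y) c = a *: g x c + g y c) ->
          pi (fun c => tsum (mu c) (fun c1 c2 => g c2 c1)) = pi (fun v => pi (g v))) &
      (forall p : P, pi (fun c => eps c *: p) = p)].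

Definition cact (k : fieldType) (C : lmodType k) (P : lmodType k)
    (pi : (C -> P) -> P) (phi : C -> k) (p : P) : P :=
  pi (fun c => phi c *: p).

Definition dual_mul (k : fieldType) (C : lmodType k) (mu : C -> seq (C * C))
    (phi psi : C -> k) : C -> k :=
  fun c => tsum (mu c) (fun c1 c2 => psi c1 * phi c2).

Definition dense_subring (k : fieldType) (C : lmodType k)
    (mu : C -> seq (C * C)) (eps : C -> k) (R : (C -> k) -> Prop) : Prop :=
  [/\ (forall r, R r -> lform r),
      R eps,
      (forall r s, R r -> R s -> R (fun c => r c - s c)),
      (forall r s, R r -> R s -> R (dual_mul mu r s)) &
      (* density: every phi + Ann(V), V finite dimensional (spanned by sv), meets R *)
      (forall phi, lform phi -> forall sv : seq C,
          exists r, R r /\ forall c, c \in sv -> r c = phi c)].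

Definition contra_morph (k : fieldType) (C : lmodType k) (P Q : lmodType k)
    (piP : (C -> P) -> P) (piQ : (C -> Q) -> Q) (f : P -> Q) : Prop :=
  islin f /\ (forall g : C -> P, islin g -> f (piP g) = piQ (fun c => f (g c))).

Definition Rmod_morph (k : fieldType) (C : lmodType k) (R : (C -> k) -> Prop)
    (P Q : lmodType k) (piP : (C -> P) -> P) (piQ : (C -> Q) -> Q) (f : P -> Q) : Prop :=
  (forall x y, f (x + y) = f x + f y) /\
  (forall r, R r -> forall p, f (cact piP r p) = cact piQ r (f p)).

(* A contramodule morphism is clearly a module morphism.  Conversely, let
   f be additive and commute with the action of R.  Since H^1(C) is finite
   dimensional, density provides finitely many x_1, ..., x_d in R, vanishing at
   e, that detect H^1(C) modulo e; by induction on the coradical filtration the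
   map c |-> (lhit x_i c)_i is then injective on C / k e, so every linear map on
   C vanishing at e is a convolution sum_i x_i * g_i.  Consequently the defects
   of f, namely f (phi . p) - phi . f p and then f (pi g) - pi (f o g), form a
   subset S of Q with S contained in sum_i x_i . S.  A Nakayama lemma for
   contramodules kills such S: iterating gives a tree q of elements of S, the
   formal series sum_w x_w (x) q_w is a well-defined element of Hom(C, Q) by
   conilpotency, and contraassociativity applied to it forces the root to be 0. *)
From HB Require Import structures.
From mathcomp Require Import all_boot all_algebra.
From mathcomp Require Import boolp classical_sets ring.
Set Implicit Arguments. Unset Strict Implicit. Unset Printing Implicit Defensive.
Import GRing.Theory.
Local Open Scope ring_scope.

Section LinearMaps.
Variable k : fieldType.
Implicit Types U V W : lmodType k.

Lemma islin0 U V (f : U -> V) : islin f -> f 0 = 0.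
Proof.
move=> lin_f; have := lin_f 1 0 0; rewrite !scale1r addr0 => E.
by apply: (addrI (f 0)); rewrite -E addr0.
Qed.

Lemma islinD U V (f : U -> V) : islin f -> forall x y, f (x + y) = f x + f y.
Proof. by move=> lin_f x y; have := lin_f 1 x y; rewrite !scale1r. Qed.

Lemma islinZ U V (f : U -> V) : islin f -> forall a x, f (a *: x) = a *: f x.
Proof. by move=> lin_f a x; rewrite -[a *: x]addr0 lin_f islin0 // addr0. Qed.

Lemma islinN U V (f : U -> V) : islin f -> forall x, f (- x) = - f x.
Proof. by move=> lin_f x; rewrite -scaleN1r islinZ // scaleN1r. Qed.

Lemma islinB U V (f : U -> V) : islin f -> forall x y, f (x - y) = f x - f y.
Proof. by move=> lin_f x y; rewrite islinD // islinN. Qed.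

Lemma islin_sum U V (f : U -> V) (I : Type) (s : seq I) (F : I -> U) :
  islin f -> f (\sum_(i <- s) F i) = \sum_(i <- s) f (F i).
Proof.
move=> lin_f; elim: s => [|i s IHs]; first by rewrite !big_nil islin0.
by rewrite !big_cons islinD // IHs.
Qed.

Lemma eq_islin U V (f g : U -> V) : islin g -> f =1 g -> islin f.
Proof. by move=> lin_g fg a x y; rewrite !fg. Qed.

Lemma islin_cst0 U V : islin (fun _ : U => 0 : V).
Proof. by move=> a x y; rewrite scaler0 addr0. Qed.

Lemma islin_add U V (f g : U -> V) :
  islin f -> islin g -> islin (fun x => f x + g x).
Proof. by move=> lin_f lin_g a x y; rewrite lin_f lin_g scalerDr addrACA. Qed.

Lemma islin_scale U V (b : k) (f : U -> V) : islin f -> islin (fun x => b *: f x).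
Proof. by move=> lin_f a x y; rewrite lin_f scalerDr !scalerA mulrC. Qed.

Lemma islin_bigsum U V (I : Type) (s : seq I) (F : I -> U -> V) :
  (forall i, islin (F i)) -> islin (fun x => \sum_(i <- s) F i x).
Proof.
move=> lin_F; elim: s => [|i s IHs].
  by apply: (eq_islin (@islin_cst0 U V)) => x; rewrite big_nil.
by apply: (eq_islin (islin_add (lin_F i) IHs)) => x; rewrite big_cons.
Qed.

Lemma islin_comp U V W (f : V -> W) (g : U -> V) :
  islin f -> islin g -> islin (fun x => f (g x)).
Proof. by move=> lin_f lin_g a x y; rewrite lin_g lin_f. Qed.

Lemma islin_smul U V (t : U -> k) (p : V) : lform t -> islin (fun x => t x *: p).
Proof. by move=> lin_t a x y; rewrite lin_t scalerDl scalerA. Qed.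

Lemma lform_islin U (t : U -> k) : lform t <-> islin (t : U -> k^o).
Proof. by []. Qed.

Lemma lform0 U (t : U -> k) : lform t -> t 0 = 0.
Proof. by move/lform_islin/islin0. Qed.

Lemma lformD U (t : U -> k) : lform t -> forall x y, t (x + y) = t x + t y.
Proof. by move/lform_islin/islinD. Qed.

Lemma lformZ U (t : U -> k) : lform t -> forall a x, t (a *: x) = a * t x.
Proof. by move/lform_islin/islinZ. Qed.

Lemma lformN U (t : U -> k) : lform t -> forall x, t (- x) = - t x.
Proof. by move/lform_islin/islinN. Qed.

Lemma lformB U (t : U -> k) : lform t -> forall x y, t (x - y) = t x - t y.
Proof. by move/lform_islin/islinB. Qed.

Lemma lform_sum U (t : U -> k) (I : Type) (s : seq I) (F : I -> U) :
  lform t -> t (\sum_(i <- s) F i) = \sum_(i <- s) t (F i).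
Proof. by move/lform_islin/islin_sum. Qed.

Lemma eq_lform U (f g : U -> k) : lform g -> f =1 g -> lform f.
Proof. by move=> lin_g fg a x y; rewrite !fg. Qed.

Lemma lform_bigsum U (I : eqType) (s : seq I) (F : I -> U -> k) :
  {in s, forall i, lform (F i)} -> lform (fun x => \sum_(i <- s) F i x).
Proof.
move=> lin_F a x y; rewrite mulr_sumr -big_split /=.
by apply: eq_big_seq => i /lin_F ->.
Qed.

Lemma lformMl U (t : U -> k) (b : k) : lform t -> lform (fun x => b * t x).
Proof. by move=> lin_t a x y; rewrite lin_t mulrDr mulrCA. Qed.

Lemma lformMr U (t : U -> k) (b : k) : lform t -> lform (fun x => t x * b).
Proof. by move=> lin_t a x y; rewrite lin_t mulrDl mulrA. Qed.

Lemma lform_comp U V (t : V -> k) (f : U -> V) :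
  lform t -> islin f -> lform (fun x => t (f x)).
Proof. by move=> lin_t lin_f a x y; rewrite lin_f lformD // lformZ. Qed.

Lemma islin_stable U V (F : nat -> U -> V) (N : U -> nat) :
  (forall M, islin (F M)) -> (forall u M, (N u <= M)%N -> F M u = F (N u) u) ->
  islin (fun u => F (N u) u).
Proof.
move=> lin_F stable a u v; pose M := (N (a *: u + v)%R + N u + N v)%N.
rewrite -(stable _ M) ?lin_F -?(stable u M) -?(stable v M) // /M.
- exact: leq_addl.
- by rewrite -addnA addnCA leq_addr.
- by rewrite -addnA leq_addr.
Qed.

End LinearMaps.

Section LinearExtension.
Variables (k : fieldType) (W P : lmodType k).
Local Open Scope classical_set_scope.

Definition lin_graph (X : set (W * P)) :=
  (forall w p p', X (w, p) -> X (w, p') -> p = p') /\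
  (forall a w p w' p', X (w, p) -> X (w', p') -> X (a *: w + w', a *: p + p')).

Lemma lin_graph0 X w p : lin_graph X -> X (w, p) -> X (0, 0).
Proof.
by case=> _ lin_X Xwp; have := lin_X (-1) _ _ _ _ Xwp Xwp; rewrite !scaleN1r !addNr.
Qed.

Definition adjoin (X : set (W * P)) (w0 : W) : set (W * P) :=
  fun wp => exists a w, X (w, wp.2) /\ wp.1 = w + a *: w0.

Lemma sub_adjoin X w0 : X `<=` adjoin X w0.
Proof. by case=> w p Xwp; exists 0, w; rewrite scale0r addr0. Qed.

Lemma lin_graph_adjoin X w0 : lin_graph X -> (forall p, ~ X (w0, p)) ->
  lin_graph (adjoin X w0).
Proof.
move=> [fun_X lin_X] w0_out; split.
- move=> w p p' [a [w1 [/= X1 E1]]] [a' [w2 [/= X2 E2]]].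
  have [eq_a|neq_a] := eqVneq a a'.
    by move: E2; rewrite -eq_a E1 => /addIr E12; rewrite E12 in X1; apply: fun_X _ _ _ X1 X2.
  exfalso; apply: (w0_out ((a - a')^-1 *: (p' - p))).
  have -> : w0 = (a - a')^-1 *: (w2 - w1).
    apply: (@scalerI _ _ (a - a')); first by rewrite subr_eq0.
    rewrite scalerA mulfV ?subr_eq0 // scale1r scalerBl.
    by apply/eqP; rewrite subr_eq addrAC -E2 E1 addrAC subrr add0r.
  have X21 : X (w2 - w1, p' - p).
    by have := lin_X (-1) _ _ _ _ X1 X2; rewrite !scaleN1r !(addrC (- _)).
  have X00 := lin_graph0 (conj fun_X lin_X) X1.
  by have := lin_X ((a - a')^-1) _ _ _ _ X21 X00; rewrite !addr0.
- move=> c w p w' p' [a [w1 [/= X1 ->]]] [a' [w2 [/= X2 ->]]].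
  exists (c * a + a'), (c *: w1 + w2); split; first exact: lin_X.
  by rewrite /= scalerDl -scalerA scalerDr addrACA.
Qed.

Lemma lin_graph_bigcup (G0 : set (W * P)) (F : set (set (W * P))) :
  lin_graph G0 -> (forall X, F X -> lin_graph (G0 `|` X)) ->
  total_on F subset -> lin_graph (G0 `|` \bigcup_(X in F) X).
Proof.
move=> lin_G0 lin_F chainF.
have common u v : (G0 `|` \bigcup_(X in F) X) u -> (G0 `|` \bigcup_(X in F) X) v ->
    exists Y, [/\ lin_graph Y, Y u, Y v & Y `<=` G0 `|` \bigcup_(X in F) X].
  have sub X : F X -> G0 `|` X `<=` G0 `|` \bigcup_(X in F) X.
    by move=> FX z [G0z|Xz]; [left | right; exists X].
  case=> [G0u|[X FX Xu]] [G0v|[X' FX' X'v]].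
  - by exists G0; split=> // z G0z; left.
  - by exists (G0 `|` X'); split; [exact: lin_F | left | right | exact: sub].
  - by exists (G0 `|` X); split; [exact: lin_F | right | left | exact: sub].
  have [XX'|X'X] := chainF _ _ FX FX'.
    by exists (G0 `|` X'); split; [exact: lin_F | right; exact: XX' | right | exact: sub].
  by exists (G0 `|` X); split; [exact: lin_F | right | right; exact: X'X | exact: sub].
split.
- move=> w p p' Xp Xp'; have [Y [[fun_Y _] Yp Yp' _]] := common _ _ Xp Xp'.
  exact: fun_Y _ _ _ Yp Yp'.
- move=> a w p w' p' Xp Xp'; have [Y [[_ lin_Y] Yp Yp' sub_Y]] := common _ _ Xp Xp'.
  exact/sub_Y/lin_Y.
Qed.

Lemma lin_graph_extend (G0 : set (W * P)) : lin_graph G0 -> G0 (0, 0) ->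
  exists h : W -> P, islin h /\ forall w p, G0 (w, p) -> h w = p.
Proof.
move=> lin_G0 G00.
have [A [lin_A A_max]] : exists A, lin_graph (G0 `|` A) /\
    forall B, A `<` B -> ~ lin_graph (G0 `|` B).
  apply: Zorn_bigcup => F lin_F chainF; exact: lin_graph_bigcup.
have total w0 : exists p, (G0 `|` A) (w0, p).
  apply: contrapT => w0_out.
  have A_adj : A `<` adjoin (G0 `|` A) w0.
    split=> [z Az|]; first by apply: sub_adjoin; right.
    move=> adj_sub; apply: w0_out; exists 0; right; apply: adj_sub.
    by exists 1, 0; split; [left | rewrite scale1r add0r].
  apply: (A_max _ A_adj); rewrite setUidr; last first.
    by move=> z G0z; apply: sub_adjoin; left.
  by apply: lin_graph_adjoin => // p G0A; apply: w0_out; exists p.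
pose h w := projT1 (cid (total w)).
have hP w : (G0 `|` A) (w, h w) by rewrite /h; case: cid.
case: lin_A => fun_A lin_A'; exists h; split.
  by move=> a x y; apply: fun_A _ _ _ (hP _) _; apply: lin_A'; apply: hP.
by move=> w p G0wp; apply: fun_A _ _ _ (hP w) _; left.
Qed.

End LinearExtension.

Section Factorization.
Variable k : fieldType.
Implicit Types U V W P : lmodType k.

Lemma islin_factor U W P (phi : U -> W) (g : U -> P) :
  islin phi -> islin g -> (forall u, phi u = 0 -> g u = 0) ->
  exists h : W -> P, islin h /\ forall u, h (phi u) = g u.
Proof.
move=> lin_phi lin_g ker_phi_g.
pose G0 := fun wp : W * P => exists u, wp = (phi u, g u).
have [||h [lin_h hG0]] := @lin_graph_extend k W P G0.
- split.
  + move=> w p p' [u [-> ->]] [u' [E ->]]; apply/eqP; rewrite -subr_eq0 -islinB //.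
    by apply/eqP/ker_phi_g; rewrite islinB // E subrr.
  + move=> a w p w' p' [u [-> ->]] [u' [-> ->]].
    by exists (a *: u + u'); rewrite lin_phi lin_g.
- by exists 0; rewrite (islin0 lin_phi) (islin0 lin_g).
by exists h; split=> // u; apply: hG0; exists u.
Qed.

Lemma lform_sep V (v : V) : (forall t : V -> k, lform t -> t v = 0) -> v = 0.
Proof.
move=> forms_v; apply: contrapT => /eqP v_neq0.
have [|||t [lin_t tv]] := @islin_factor k^o V k^o (fun a => a *: v) id.
- by move=> a x y /=; rewrite scalerDl scalerA.
- by [].
- by move=> a /eqP; rewrite scaler_eq0 (negbTE v_neq0) orbF => /eqP.
by have := forms_v t lin_t; rewrite -[v]scale1r tv => /eqP; rewrite oner_eq0.
Qed.

Lemma lform_inj V (v w : V) : (forall t : V -> k, lform t -> t v = t w) -> v = w.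
Proof.
move=> forms_vw; apply/eqP; rewrite -subr_eq0; apply/eqP/lform_sep => t lin_t.
by rewrite lformB // forms_vw // subrr.
Qed.

End Factorization.

Section TensorForms.
Variables (k : fieldType) (C : lmodType k).

Lemma lform_dual_last n (u : nat -> C) :
  ~ (exists lam : nat -> k, u n = \sum_(i < n) lam i *: u i) ->
  exists al, [/\ lform al, al (u n) = 1 & forall i, (i < n)%N -> al (u i) = 0].
Proof.
move=> u_indep.
have [|||al [lin_al alP]] := @islin_factor _ _ _ k^o
    (fun r : 'rV[k]_n.+1 => \sum_(i < n.+1) r 0 i *: u i) (fun r => r 0 ord_max).
- move=> a r r'; rewrite scaler_sumr -big_split /=; apply: eq_bigr => i _.
  by rewrite !mxE scalerDl scalerA.
- by move=> a r r'; rewrite !mxE.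
- move=> r; rewrite big_ord_recr /= => /eqP; rewrite addr_eq0 => /eqP r_rel.
  apply: contrapT => /eqP r_neq0; apply: u_indep.
  exists (fun i => - (r 0 (inord i) / r 0 ord_max)).
  apply: (@scalerI _ _ (r 0 ord_max)) => //.
  rewrite (_ : _ *: u n = - \sum_(i < n) r 0 (widen_ord (leqnSn n) i) *: u i);
    last by rewrite r_rel opprK.
  rewrite scaler_sumr -sumrN.
  apply: eq_bigr => i _; rewrite scalerA mulrN mulrCA mulfV // mulr1 scaleNr.
  rewrite (_ : inord i = widen_ord (leqnSn n) i) //.
  by apply: val_inj; rewrite /= inordK // leqW.
have al_u (j : 'I_n.+1) : al (u j) = (j == ord_max)%:R.
  have := alP (delta_mx 0 j); rewrite (bigD1 j) //= mxE !eqxx scale1r big1 ?addr0.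
    by move=> ->; rewrite mxE eqxx eq_sym.
  by move=> i /negbTE i_neq_j; rewrite mxE eqxx i_neq_j scale0r.
exists al; split=> //; first by have := al_u ord_max; rewrite eqxx.
move=> i lt_in; have := al_u (Ordinal (leqW lt_in)) => /= ->.
by rewrite -val_eqE /= ltn_eqF.
Qed.

Lemma tensor_eq0_ord n (u v : nat -> C) :
  (forall al, lform al -> \sum_(i < n) al (u i) *: v i = 0) ->
  forall B : C -> C -> k, (forall y, lform (B^~ y)) -> (forall x, lform (B x)) ->
  \sum_(i < n) B (u i) (v i) = 0.
Proof.
elim: n v => [|n IHn] v forms_uv B lin1 lin2; first by rewrite big_ord0.
case: (pselect (exists lam : nat -> k, u n = \sum_(i < n) lam i *: u i)).
  move=> [lam u_n].
  pose v' i := v i + lam i *: v n.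
  have uv' al : lform al -> \sum_(i < n.+1) al (u i) *: v i = \sum_(i < n) al (u i) *: v' i.
    move=> lin_al; rewrite big_ord_recr /= u_n lform_sum // scaler_suml -big_split /=.
    by apply: eq_bigr => i _; rewrite lformZ // scalerDr scalerA mulrC.
  have -> : \sum_(i < n.+1) B (u i) (v i) = \sum_(i < n) B (u i) (v' i).
    rewrite big_ord_recr /= u_n (lform_sum _ _ (lin1 _)) -big_split /=.
    apply: eq_bigr => i _.
    by rewrite /v' (lformD (lin2 _)) (lformZ (lin1 _)) (lformZ (lin2 _)).
  by apply: IHn => // al lin_al; rewrite -uv' // forms_uv.
move=> u_indep.
have [al [lin_al al_un al_u]] := lform_dual_last u_indep.
have v_n : v n = 0.
  have := forms_uv al lin_al; rewrite big_ord_recr /= al_un scale1r big1 ?add0r //.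
  by move=> i _; rewrite al_u ?scale0r.
rewrite big_ord_recr /= v_n (lform0 (lin2 _)) addr0; apply: (IHn v) => // al' lin_al'.
by have := forms_uv al' lin_al'; rewrite big_ord_recr /= v_n scaler0 addr0.
Qed.

Lemma tensor_eq0 (s : seq (C * C)) :
  (forall al, lform al -> \sum_(ab <- s) al ab.1 *: ab.2 = 0) ->
  forall B : C -> C -> k, (forall y, lform (B^~ y)) -> (forall x, lform (B x)) ->
  \sum_(ab <- s) B ab.1 ab.2 = 0.
Proof.
move=> forms_s B lin1 lin2; rewrite (big_nth 0) big_mkord.
apply: (tensor_eq0_ord (u := fun i => (nth 0 s i).1) (v := fun i => (nth 0 s i).2)) => //.
move=> al lin_al.
by have := forms_s al lin_al; rewrite (big_nth 0) big_mkord.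
Qed.

End TensorForms.

Lemma detecting_forms (k : fieldType) (C : lmodType k) (e : C) (s : seq C) :
  exists (d : nat) (y : nat -> C -> k), (forall i, lform (y i) /\ y i e = 0) /\
  forall a : nat -> k, (forall i, (i < d)%N -> \sum_(j < size s) a j * y i s`_j = 0) ->
  forall t, lform t -> t e = 0 -> \sum_(j < size s) a j * t s`_j = 0.
Proof.
(* Take forms killing [e] whose restrictions to [s] have maximal rank. *)
pose nth0 (ys : seq (C -> k)) i := nth (fun _ => 0) ys i.
pose mx (ys : seq (C -> k)) : 'M[k]_(size ys, size s) := \matrix_(i, j) nth0 ys i s`_j.
pose good ys := forall i, lform (nth0 ys i) /\ nth0 ys i e = 0.
pose has_rank r := `[< exists ys, good ys /\ \rank (mx ys) = r >].
have [||r0 /asboolP [ys0 [good_ys0 rank_ys0]] r0_max] := @ex_maxnP has_rank (size s).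
- exists (\rank (mx [::])); apply/asboolP; exists [::]; split => // i.
  by rewrite /nth0 nth_nil; split => // a x y; rewrite mulr0 addr0.
- by move=> r /asboolP [ys [_ <-]]; apply: rank_leq_col.
exists (size ys0), (nth0 ys0); split=> // a a_ys0 t lin_t t_e.
pose ys1 := t :: ys0.
have rank_ys1 : (\rank (mx ys1) <= r0)%N.
  by apply: r0_max; apply/asboolP; exists ys1; split=> // -[|i]; [split | exact: good_ys0 i].
have sub01 : (mx ys0 <= mx ys1)%MS.
  apply/row_subP => i; rewrite (_ : row i _ = row (lift ord0 i) (mx ys1)) ?row_sub //.
  by apply/rowP => j; rewrite !mxE.
have sub10 : (mx ys1 <= mx ys0)%MS.
  have [_ <-] := mxrank_leqif_sup sub01.
  by rewrite eqn_leq rank_ys0 rank_ys1 -rank_ys0 mxrank_leqif_sup.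
have [D t_row] := submxP (submx_trans (row_sub ord0 (mx ys1)) sub10).
pose av : 'cV[k]_(size s) := \col_j a j.
have mx_av : mx ys0 *m av = 0.
  apply/colP => i; rewrite !mxE -[RHS](a_ys0 i (ltn_ord i)); apply: eq_bigr => j _.
  by rewrite /mx /av !mxE mulrC.
have := congr1 (fun M => (M *m av) 0 0) t_row; rewrite /= -mulmxA mx_av mulmx0 !mxE.
move=> E; rewrite -[RHS]E; apply: eq_bigr => j _.
by rewrite /mx /av !mxE mulrC.
Qed.

Section Coalgebra.
Variables (k : fieldType) (C : lmodType k) (mu : C -> seq (C * C)) (eps : C -> k).
Hypothesis HC : is_coalgebra mu eps.

Lemma eps_lform : lform eps. Proof. by case: HC. Qed.

Lemma comul_lform (b : C -> C -> k) :
  (forall y, lform (fun x => b x y)) -> (forall x, lform (b x)) ->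
  lform (fun c => \sum_(ab <- mu c) b ab.1 ab.2).
Proof. by case: HC => _ comul_b _ _ _ lin1 lin2; apply: (comul_b b). Qed.

Lemma coassoc (t : C -> C -> C -> k) :
  (forall y z, lform (fun x => t x y z)) -> (forall x z, lform (fun y => t x y z)) ->
  (forall x y, lform (t x y)) -> forall c,
  \sum_(ab <- mu c) \sum_(ab' <- mu ab.1) t ab'.1 ab'.2 ab.2 =
  \sum_(ab <- mu c) \sum_(ab' <- mu ab.2) t ab.1 ab'.1 ab'.2.
Proof. by case: HC => _ _ coassoc_t _ _ lin1 lin2 lin3; apply: (coassoc_t t). Qed.

Lemma counitl c : \sum_(ab <- mu c) eps ab.1 *: ab.2 = c.
Proof. by case: HC => _ _ _ counit _; apply: counit. Qed.

Lemma counitr c : \sum_(ab <- mu c) eps ab.2 *: ab.1 = c.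
Proof. by case: HC => _ _ _ _ counit; apply: counit. Qed.

(* Forms separate points, so the defining property of [mu] for forms suffices. *)
Lemma comul_islin (V : lmodType k) (B : C -> C -> V) :
  (forall y, islin (fun x => B x y)) -> (forall x, islin (B x)) ->
  islin (fun c => \sum_(ab <- mu c) B ab.1 ab.2).
Proof.
move=> lin1 lin2 a u v; apply: lform_inj => t lin_t.
rewrite lformD // lformZ // !lform_sum //.
apply: (comul_lform (b := fun x y => t (B x y))) => [y|x]; exact: lform_comp.
Qed.

Definition comul_head (l : seq C) : seq (seq C) :=
  if l is y :: r then [seq [:: ab.1, ab.2 & r] | ab <- mu y] else [::].

Lemma iter_muS m c : iter_mu mu m.+1 c = flatten [seq comul_head l | l <- iter_mu mu m c].
Proof. by []. Qed.

Lemma size_iter_mu m c l : l \in iter_mu mu m c -> size l = m.+1.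
Proof.
elim: m l => [|m IHm] l /=; first by rewrite inE => /eqP ->.
move=> /flattenP [s /mapP [[|y r] l0_in ->]] //= /mapP [ab _ ->] /=.
by have := IHm _ l0_in => /= [->].
Qed.

Definition iter_sum (V : nmodType) m (F : seq C -> V) c := \sum_(l <- iter_mu mu m c) F l.

Lemma iter_sum_head (V : nmodType) m (F : seq C -> V) c :
  iter_sum m.+1 F c = iter_sum m (fun l => \sum_(l' <- comul_head l) F l') c.
Proof. by rewrite /iter_sum iter_muS big_flatten /= big_map. Qed.

Lemma iter_sumMl m (a : k) (F : seq C -> k) c :
  iter_sum m (fun l => a * F l) c = a * iter_sum m F c.
Proof. by rewrite /iter_sum mulr_sumr. Qed.

Lemma iter_sumSr (V : nmodType) m (F : seq C -> V) c :
  iter_sum m.+1 F c = \sum_(ab <- mu c) iter_sum m (fun l => F (rcons l ab.2)) ab.1.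
Proof.
elim: m F c => [|m IHm] F c.
  rewrite iter_sum_head /iter_sum /= big_cons big_nil addr0 big_map.
  by apply: eq_bigr => ab _; rewrite big_cons big_nil addr0.
rewrite iter_sum_head IHm; apply: eq_bigr => ab _.
rewrite iter_sum_head /iter_sum; apply: eq_big_seq => l /size_iter_mu.
by case: l => [|y r] //= _; rewrite !big_map.
Qed.

Lemma iter_sum_lform m (t : seq C -> k) : multilin_form m.+1 t -> lform (iter_sum m t).
Proof.
elim: m t => [|m IHm] t lin_t.
  by move=> a x y; rewrite /iter_sum /= !big_seq1; apply: (lin_t [::] [::]).
pose g c := \sum_(ab <- mu c) iter_sum m (fun l => t (rcons l ab.2)) ab.1.
apply: (eq_lform (g := g)); last by move=> c; rewrite iter_sumSr.
apply: (comul_lform (b := fun a b => iter_sum m (fun l => t (rcons l b)) a)) => [y|x].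
- apply: IHm => l r size_lr a u v; rewrite -!cats1 -!catA /= !cats1.
  by apply: (lin_t l (rcons r y)); rewrite size_rcons addnS size_lr.
- apply: lform_bigsum => l /size_iter_mu size_l a u v.
  by rewrite -!cats1; apply: (lin_t l [::]); rewrite size_l addn0.
Qed.

Lemma iter_sumSl m (t : seq C -> k) c : multilin_form m.+2 t ->
  iter_sum m.+1 t c = \sum_(ab <- mu c) iter_sum m (fun l => t (ab.1 :: l)) ab.2.
Proof.
elim: m t c => [|m IHm] t c lin_t.
  by rewrite iter_sumSr; apply: eq_bigr => ab _; rewrite /iter_sum /= !big_seq1.
pose F a1 a2 b := iter_sum m (fun l => t (a1 :: rcons l b)) a2.
transitivity (\sum_(ab <- mu c) \sum_(ab' <- mu ab.1) F ab'.1 ab'.2 ab.2).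
  rewrite iter_sumSr; apply: eq_bigr => ab _; rewrite IHm // => l r size_lr a x y.
  rewrite -!cats1 -!catA /=.
  by apply: (lin_t l (r ++ [:: ab.2])); rewrite size_cat /= addn1 addnS size_lr.
rewrite coassoc; first by apply: eq_bigr => ab _; rewrite iter_sumSr.
- move=> y z; apply: lform_bigsum => l /size_iter_mu size_l.
  by apply: (lin_t [::] (rcons l z)); rewrite size_rcons size_l.
- move=> x z; apply: iter_sum_lform => l r size_lr.
  rewrite (_ : (fun u => _) = (fun u => t ((x :: l) ++ u :: rcons r z))).
    by apply: lin_t; rewrite /= size_rcons addSn addnS size_lr.
  by apply: funext => u; rewrite /= rcons_cat.
- move=> x y; apply: lform_bigsum => l /size_iter_mu size_l.
  rewrite (_ : (fun u => _) = (fun u => t ((x :: l) ++ [:: u]))).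
    by apply: lin_t; rewrite /= size_l addn0.
  by apply: funext => u; rewrite cats1.
Qed.

End Coalgebra.

Section CoradicalFiltration.
Variables (k : fieldType) (C : lmodType k) (mu : C -> seq (C * C)) (eps : C -> k) (e : C).
Hypothesis HC : is_coalgebra mu eps.
Hypothesis He : coaugmentation mu eps e.

Lemma eps_e : eps e = 1. Proof. by case: He. Qed.

Lemma comul_e (b : C -> C -> k) :
  (forall y, lform (fun x => b x y)) -> (forall x, lform (b x)) ->
  \sum_(ab <- mu e) b ab.1 ab.2 = b e e.
Proof. by case: He => _ comul_b lin1 lin2; apply: (comul_b b). Qed.

(* [c] lies in the kernel of the iterated reduced comultiplication
   [C -> C_+^{(x) m+1}]. *)
Definition coradical_le m c :=
  forall t, multilin_form m.+1 t -> kills_e e m.+1 t -> iter_sum mu m t c = 0.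

Lemma coradical_leS m c : coradical_le m c -> coradical_le m.+1 c.
Proof.
move=> c_le t lin_t kill_t; rewrite iter_sum_head; apply: c_le.
- move=> [|y l] r /= size_lr.
  + apply: (eq_lform (g := fun x => \sum_(ab <- mu x) t (ab.1 :: ab.2 :: r)));
      last by move=> x; rewrite big_map.
    apply: (comul_lform HC (b := fun a b => t (a :: b :: r))) => z.
    * by apply: (lin_t [::] (z :: r)); rewrite /= -size_lr.
    * by apply: (lin_t [:: z] r); rewrite /= -size_lr.
  + apply: (eq_lform (g := fun x => \sum_(ab <- mu y) t ((ab.1 :: ab.2 :: l) ++ x :: r)));
      last by move=> x; rewrite big_map.
    by apply: lform_bigsum => ab _; apply: lin_t; rewrite /= -size_lr.
- move=> [|y l] r /= size_lr; rewrite big_map.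
  + rewrite (comul_e (b := fun a b => t (a :: b :: r))).
    * by apply: (kill_t [::] (e :: r)); rewrite /= -size_lr.
    * by move=> z; apply: (lin_t [::] (z :: r)); rewrite /= -size_lr.
    * by move=> z; apply: (lin_t [:: z] r); rewrite /= -size_lr.
  + by rewrite big1 // => ab _; apply: (kill_t (ab.1 :: ab.2 :: l) r); rewrite /= -size_lr.
Qed.

Lemma coradical_le_mono m n c : coradical_le m c -> (m <= n)%N -> coradical_le n c.
Proof.
move=> c_le; elim: n => [|n IHn]; first by rewrite leqn0 => /eqP <-.
by rewrite leq_eqVlt => /orP [/eqP <- | /IHn /coradical_leS].
Qed.

End CoradicalFiltration.

Section Contramodule.
Variables (k : fieldType) (C : lmodType k) (mu : C -> seq (C * C)) (eps : C -> k).
Variables (Q : lmodType k) (pi : (C -> Q) -> Q).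
Hypothesis HQ : is_contramodule mu eps pi.

Lemma contra_ext (f g : C -> Q) : islin g -> f =1 g -> pi f = pi g.
Proof. by case: HQ => ext _ _ _ lin_g fg; apply: ext => //; apply: eq_islin fg. Qed.

Lemma contra_lin (a : k) (f g : C -> Q) : islin f -> islin g ->
  pi (fun c => a *: f c + g c) = a *: pi f + pi g.
Proof. by case: HQ => _ lin _ _; apply: lin. Qed.

Lemma contra_unit (p : Q) : pi (fun c => eps c *: p) = p.
Proof. by case: HQ => _ _ _ unit; apply: unit. Qed.

Lemma contra0 : pi (fun _ => 0) = 0.
Proof.
have lin0 := @islin_cst0 k C Q.
have E : pi (fun c => 1 *: (0 : Q) + 0) = pi (fun _ => 0).
  by apply: contra_ext => // c; rewrite scaler0 addr0.
have := contra_lin 1 lin0 lin0; rewrite E scale1r => E'.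
by apply: (addrI (pi (fun _ => 0))); rewrite -E' addr0.
Qed.

Lemma contraD (f g : C -> Q) : islin f -> islin g ->
  pi (fun c => f c + g c) = pi f + pi g.
Proof.
move=> lin_f lin_g; rewrite -[pi f]scale1r -contra_lin //.
by apply: contra_ext => [|c]; [exact: islin_add (islin_scale _ lin_f) lin_g | rewrite scale1r].
Qed.

Lemma contraZ (b : k) (f : C -> Q) : islin f -> pi (fun c => b *: f c) = b *: pi f.
Proof.
move=> lin_f; rewrite -[b *: pi f]addr0 -contra0 -contra_lin //; last exact: islin_cst0.
apply: contra_ext => [|c]; last by rewrite addr0.
by apply: islin_add; [exact: islin_scale | exact: islin_cst0].
Qed.

Lemma contra_sum (I : Type) (s : seq I) (F : I -> C -> Q) :
  (forall i, islin (F i)) -> pi (fun c => \sum_(i <- s) F i c) = \sum_(i <- s) pi (F i).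
Proof.
move=> lin_F; elim: s => [|i s IHs].
  rewrite big_nil -[RHS]contra0.
  by apply: contra_ext => [|c]; [exact: islin_cst0 | rewrite big_nil].
rewrite big_cons -IHs -contraD //; last exact: islin_bigsum.
by apply: contra_ext => [|c]; [apply: islin_add => //; exact: islin_bigsum | rewrite big_cons].
Qed.

Lemma cactD (x : C -> k) (p q : Q) : lform x ->
  cact pi x (p + q) = cact pi x p + cact pi x q.
Proof.
move=> lin_x; rewrite /cact -contraD; try exact: islin_smul.
by apply: contra_ext => [|c]; [apply: islin_add; exact: islin_smul | rewrite scalerDr].
Qed.

Lemma cactZ (x : C -> k) (a : k) (p : Q) : lform x -> cact pi x (a *: p) = a *: cact pi x p.
Proof.
move=> lin_x; rewrite /cact -contraZ; last exact: islin_smul.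
by apply: contra_ext => [|c]; [apply: islin_scale; exact: islin_smul | rewrite !scalerA mulrC].
Qed.

Lemma cactB (x : C -> k) (p q : Q) : lform x ->
  cact pi x (p - q) = cact pi x p - cact pi x q.
Proof. by move=> lin_x; rewrite cactD // -scaleN1r cactZ // scaleN1r. Qed.

Lemma cact_sum (x : C -> k) (I : Type) (s : seq I) (F : I -> Q) : lform x ->
  cact pi x (\sum_(i <- s) F i) = \sum_(i <- s) cact pi x (F i).
Proof.
move=> lin_x; elim: s => [|i s IHs]; last by rewrite !big_cons cactD // IHs.
rewrite !big_nil /cact -[RHS]contra0.
by apply: contra_ext => [|c]; [exact: islin_cst0 | rewrite scaler0].
Qed.

Lemma cactDl (x y : C -> k) (p : Q) : lform x -> lform y ->
  cact pi (fun c => x c + y c) p = cact pi x p + cact pi y p.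
Proof.
move=> lin_x lin_y; rewrite /cact -contraD; try exact: islin_smul.
by apply: contra_ext => [|c]; [apply: islin_add; exact: islin_smul | rewrite scalerDl].
Qed.

(* Contraassociativity applied to [v, u |-> x v *: g u]. *)
Lemma contra_conv (x : C -> k) (g : C -> Q) : lform x -> islin g ->
  pi (fun c => \sum_(ab <- mu c) x ab.2 *: g ab.1) = cact pi x (pi g).
Proof.
move=> lin_x lin_g; case: HQ => _ _ contra_assoc _.
rewrite (contra_assoc (fun v u => x v *: g u)) => [|v|a u v c].
- by apply: contra_ext => [|v]; [exact: islin_smul | rewrite contraZ].
- exact: islin_scale.
- by rewrite lin_x scalerDl scalerA.
Qed.

End Contramodule.

Section Monomials.
Variables (k : fieldType) (C : lmodType k) (mu : C -> seq (C * C)) (eps : C -> k) (e : C).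
Hypothesis HC : is_coalgebra mu eps.
Hypothesis He : coaugmentation mu eps e.
Variables (x : nat -> C -> k) (d : nat).
Hypothesis x_lform : forall i, lform (x i).
Hypothesis x_e : forall i, x i e = 0.

Fixpoint words n : seq (seq nat) :=
  if n is n'.+1 then [seq i :: w | i <- iota 0 d, w <- words n'] else [:: [::]].

Lemma big_wordsS (V : nmodType) n (F : seq nat -> V) :
  \sum_(w <- words n.+1) F w = \sum_(i <- iota 0 d) \sum_(w <- words n) F (i :: w).
Proof. exact: big_allpairs_dep. Qed.

Lemma size_words n w : w \in words n -> size w = n.
Proof.
elim: n w => [|n IHn] w /=; first by rewrite inE => /eqP ->.
by move/allpairsPdep => [i [w' [_ /IHn <- ->]]].
Qed.

(* [monomial [:: i_1; ...; i_n]] is the product [x i_n * ... * x i_1] in the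
   dual algebra ([dual_mul]), the empty product being [eps]. *)
Fixpoint monomial (w : seq nat) (c : C) : k :=
  if w is i :: w' then \sum_(ab <- mu c) x i ab.1 * monomial w' ab.2 else eps c.

Fixpoint prod_form (w : seq nat) (l : seq C) : k :=
  match w, l with
  | i :: w', y :: l' => x i y * prod_form w' l'
  | [::], _ => 1
  | _ :: _, [::] => 0
  end.

Lemma prod_form_multilin w : multilin_form (size w) (prod_form w).
Proof.
move=> l r; elim: l w => [|y l IHl] [|i w] //= size_lr.
- by move=> a u v; rewrite x_lform mulrDl mulrA.
- by apply: lformMl; apply: IHl; case: size_lr.
Qed.

Lemma prod_form_kills_e w : kills_e e (size w) (prod_form w).
Proof.
move=> l r; elim: l w => [|y l IHl] [|i w] //= size_lr; first by rewrite x_e mul0r.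
by rewrite IHl ?mulr0 //; case: size_lr.
Qed.

Lemma monomial_iter_sum i w c :
  monomial (i :: w) c = iter_sum mu (size w) (prod_form (i :: w)) c.
Proof.
elim: w i c => [|j w IHw] i c.
  rewrite /= /iter_sum /= big_seq1 mulr1 -[in RHS](counitr HC c) lform_sum //.
  by apply: eq_bigr => ab _; rewrite lformZ // mulrC.
have -> : monomial [:: i, j & w] c = \sum_(ab <- mu c) x i ab.1 * monomial (j :: w) ab.2.
  by [].
rewrite (iter_sumSl HC c (@prod_form_multilin [:: i, j & w])).
by apply: eq_bigr => ab _; rewrite IHw -iter_sumMl.
Qed.

Lemma monomial_lform w : lform (monomial w).
Proof.
case: w => [|i w]; first exact: eps_lform HC.
apply: (eq_lform _ (monomial_iter_sum i w)).
by apply: (iter_sum_lform HC); apply: (@prod_form_multilin (i :: w)).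
Qed.

Lemma monomial_vanish w c m : coradical_le mu e m c -> (m < size w)%N -> monomial w c = 0.
Proof.
case: w => [|i w] // c_le size_w; rewrite monomial_iter_sum.
apply: (coradical_le_mono HC He c_le) => //.
  exact: (@prod_form_multilin (i :: w)).
exact: (@prod_form_kills_e (i :: w)).
Qed.

End Monomials.

Lemma big_ord_tail0 (V : nmodType) (A : nat -> V) N M :
  (forall n, (N < n)%N -> A n = 0) -> (N <= M)%N ->
  \sum_(n < M.+1) A n = \sum_(n < N.+1) A n.
Proof.
move=> A_tail; elim: M => [|M IHM]; first by rewrite leqn0 => /eqP ->.
rewrite leq_eqVlt => /orP [/eqP -> //|]; rewrite ltnS => le_NM.
by rewrite big_ord_recr /= -IHM // A_tail ?addr0.
Qed.

Section Nakayama.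
Variables (k : fieldType) (C : lmodType k) (mu : C -> seq (C * C)) (eps : C -> k) (e : C).
Hypothesis HC : is_coalgebra mu eps.
Hypothesis He : coaugmentation mu eps e.
Hypothesis Hconil : conilpotent mu e.
Variables (x : nat -> C -> k) (d : nat).
Hypothesis x_lform : forall i, lform (x i).
Hypothesis x_e : forall i, x i e = 0.
Variables (Q : lmodType k) (pi : (C -> Q) -> Q).
Hypothesis HQ : is_contramodule mu eps pi.

Local Notation monomial := (monomial mu eps x).
Local Notation words := (words d).

Definition cdeg (c : C) : nat := projT1 (cid (Hconil c)).

Lemma cdegP c : coradical_le mu e (cdeg c) c.
Proof. by rewrite /cdeg; case: cid. Qed.

Definition partial_series (q : seq nat -> Q) M c :=
  \sum_(n < M.+1) \sum_(w <- words n) monomial w c *: q w.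

(* The element [sum_w monomial w (x) q w] of [Hom(C, Q)]; the sum is finite
   at every [c] by conilpotency. *)
Definition series q c := partial_series q (cdeg c) c.

Lemma partial_series_stable q M c : (cdeg c <= M)%N -> partial_series q M c = series q c.
Proof.
move=> le_M; apply: (big_ord_tail0 (A := fun n => \sum_(w <- words n) monomial w c *: q w)) => //.
move=> n lt_n.
rewrite big1_seq // => w /andP [_ /size_words size_w].
by rewrite (monomial_vanish HC He x_lform x_e (@cdegP c)) ?scale0r // size_w.
Qed.

Lemma series_islin q : islin (series q).
Proof.
apply: (islin_stable (F := partial_series q)) => [M|c M]; last exact: partial_series_stable.
apply: islin_bigsum => n; apply: islin_bigsum => w.
exact/islin_smul/monomial_lform.
Qed.

Lemma series_comul q c :
  \sum_(ab <- mu c) \sum_(i <- iota 0 d) x i ab.1 *: series (fun w => q (i :: w)) ab.2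
  = series q c - eps c *: q [::].
Proof.
pose M := (cdeg c + \sum_(ab <- mu c) cdeg ab.2)%N.
transitivity (\sum_(ab <- mu c) \sum_(i <- iota 0 d)
                x i ab.1 *: partial_series (fun w => q (i :: w)) M ab.2).
  apply: eq_big_seq => ab ab_in; apply: eq_bigr => i _.
  rewrite partial_series_stable // (leq_trans _ (leq_addl _ _)) //.
  by rewrite (big_rem ab) //= leq_addr.
transitivity (\sum_(n < M.+1) \sum_(w <- words n.+1) monomial w c *: q w).
  under [RHS]eq_bigr => n _ do rewrite big_wordsS.
  rewrite exchange_big [RHS]exchange_big; apply: eq_bigr => i _ /=.
  under eq_bigr => ab _ do rewrite /partial_series scaler_sumr.
  rewrite exchange_big; apply: eq_bigr => n _ /=.
  under eq_bigr => ab _ do rewrite scaler_sumr.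
  rewrite exchange_big; apply: eq_bigr => w _ /=.
  by rewrite scaler_suml; apply: eq_bigr => ab _; rewrite scalerA.
rewrite -(partial_series_stable q (M := M.+1)); last by rewrite /M leqW // leq_addr.
by rewrite /partial_series [in RHS]big_ord_recl big_seq1 /= [eps c *: _ + _]addrC addrK.
Qed.

Section Tree.
Variable q : seq nat -> Q.
Hypothesis q_tree : forall w, q w = \sum_(i <- iota 0 d) cact pi (x i) (q (i :: w)).

Lemma cact_series v :
  \sum_(i <- iota 0 d) cact pi (x i) (series (fun w => q (i :: w)) v) = series q v.
Proof.
rewrite /series /partial_series.
under eq_bigr => i _ do rewrite (cact_sum HQ) //.
rewrite exchange_big; apply: eq_bigr => n _ /=.
under eq_bigr => i _ do rewrite (cact_sum HQ) //.
rewrite exchange_big; apply: eq_bigr => w _ /=.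
by rewrite q_tree scaler_sumr; apply: eq_bigr => i _; rewrite (cactZ HQ).
Qed.

(* Contraassociativity for [G v u := sum_i x i u *: series (q (i :: _)) v]:
   one side is [pi (series q) - q [::]] by [series_comul], the other is
   [pi (series q)] by [cact_series]. *)
Lemma contra_tree_eq0 : q [::] = 0.
Proof.
pose G v u := \sum_(i <- iota 0 d) x i u *: series (fun w => q (i :: w)) v.
have G_lin1 v : islin (G v) by apply: islin_bigsum => i; apply: islin_smul.
have G_lin2 a y z u : G (a *: y + z) u = a *: G y u + G z u.
  rewrite /G scaler_sumr -big_split; apply: eq_bigr => i _ /=.
  by rewrite series_islin scalerDr !scalerA mulrC.
have lhs : pi (fun c => \sum_(ab <- mu c) G ab.2 ab.1) = - q [::] + pi (series q).
  have lin_unit := islin_smul (q [::]) (eps_lform HC).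
  rewrite -scaleN1r -[in RHS](contra_unit HQ (q [::])) -(contra_lin HQ) //;
    last exact: series_islin.
  apply: (contra_ext HQ) => [|c]; last by rewrite series_comul scaleN1r addrC.
  by apply: islin_add; [apply: islin_scale | apply: series_islin].
have rhs : pi (fun v => pi (G v)) = pi (series q).
  apply: (contra_ext HQ) => [|v]; first exact: series_islin.
  by rewrite (contra_sum HQ) => [|i]; [exact: cact_series | apply: islin_smul].
case: HQ => _ _ contra_assoc _.
have := contra_assoc G G_lin1 G_lin2; rewrite /tsum lhs rhs -[RHS]add0r.
by move=> /addIr /eqP; rewrite oppr_eq0 => /eqP.
Qed.
End Tree.

Lemma contra_nakayama (S : Q -> Prop) :
  (forall s, S s -> exists ss : nat -> Q,
     (forall i, S (ss i)) /\ s = \sum_(i <- iota 0 d) cact pi (x i) (ss i)) ->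
  forall s, S s -> s = 0.
Proof.
move=> S_dec s0 S_s0.
have [next next_dec] : exists next : Q -> nat -> Q, forall s, S s ->
    (forall i, S (next s i)) /\ s = \sum_(i <- iota 0 d) cact pi (x i) (next s i).
  exists (fun s => if pselect (S s) is left Ss then projT1 (cid (S_dec s Ss)) else fun _ => 0).
  by move=> s Ss; case: pselect => // Ss'; case: cid.
pose fix q w := if w is i :: w' then next (q w') i else s0.
have S_q w : S (q w) by elim: w => [|i w IHw] //=; case: (next_dec _ IHw).
by apply: (@contra_tree_eq0 q) => w; case: (next_dec _ (S_q w)).
Qed.

End Nakayama.

Section Hits.
Variables (k : fieldType) (C : lmodType k) (mu : C -> seq (C * C)) (eps : C -> k) (e : C).
Hypothesis HC : is_coalgebra mu eps.
Hypothesis He : coaugmentation mu eps e.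

Definition lhit (x : C -> k) (c : C) : C := \sum_(ab <- mu c) x ab.2 *: ab.1.
Definition rhit (x : C -> k) (c : C) : C := \sum_(ab <- mu c) x ab.1 *: ab.2.

Lemma lhit_islin x : lform x -> islin (lhit x).
Proof.
move=> lin_x; apply: (comul_islin HC (B := fun a b => x b *: a)) => [y|z].
- by move=> a u v; rewrite scalerDr !scalerA mulrC.
- exact: islin_smul.
Qed.

Lemma rhit_islin x : lform x -> islin (rhit x).
Proof.
move=> lin_x; apply: (comul_islin HC (B := fun a b => x a *: b)) => [y|z].
- exact: islin_smul.
- by move=> a u v; rewrite scalerDr !scalerA mulrC.
Qed.

Lemma eps_lhit x c : lform x -> eps (lhit x c) = x c.
Proof.
move=> lin_x; have lin_eps := eps_lform HC.
rewrite -[in RHS](counitl HC c) /lhit (lform_sum _ _ lin_eps) (lform_sum _ _ lin_x).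
by apply: eq_bigr => ab _; rewrite (lformZ lin_eps) (lformZ lin_x) mulrC.
Qed.

Lemma eps_rhit x c : lform x -> eps (rhit x c) = x c.
Proof.
move=> lin_x; have lin_eps := eps_lform HC.
rewrite -[in RHS](counitr HC c) /rhit (lform_sum _ _ lin_eps) (lform_sum _ _ lin_x).
by apply: eq_bigr => ab _; rewrite (lformZ lin_eps) (lformZ lin_x) mulrC.
Qed.

Lemma lform_sub_eps (t : C -> k) : lform t -> lform (fun z => t z - t e * eps z).
Proof. by move=> lin_t a u v; rewrite lin_t (eps_lform HC); ring. Qed.

Lemma line_e v : (forall t, lform t -> t e = 0 -> t v = 0) -> v = eps v *: e.
Proof.
move=> forms_v; apply/eqP; rewrite -subr_eq0; apply/eqP/lform_sep => t lin_t.
have := forms_v _ (lform_sub_eps lin_t); rewrite (eps_e He) mulr1 subrr => /(_ erefl).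
by rewrite lformB // lformZ // mulrC => /eqP; rewrite subr_eq0 => /eqP ->; rewrite subrr.
Qed.

Lemma comul_primitive c :
  (forall al, lform al -> al e = 0 -> rhit al c = al c *: e) ->
  forall B : C -> C -> k, (forall y, lform (B^~ y)) -> (forall x, lform (B x)) ->
  \sum_(ab <- mu c) B ab.1 ab.2 = B e c + B c e - eps c * B e e.
Proof.
move=> rhit_c B lin1 lin2.
pose s := mu c ++ [:: (e, - c); (c, - e); (e, eps c *: e)].
have forms_s al : lform al -> \sum_(ab <- s) al ab.1 *: ab.2 = 0.
  move=> lin_al; rewrite big_cat !big_cons big_nil /= addr0.
  have -> : \sum_(ab <- mu c) al ab.1 *: ab.2 = al e *: c + (al c - al e * eps c) *: e.
    rewrite -(rhit_c _ (lform_sub_eps lin_al)) ?(eps_e He) ?mulr1 ?subrr //.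
    rewrite /rhit -{2}(counitl HC c) scaler_sumr -big_split /=.
    by apply: eq_bigr => ab _; rewrite scalerBl scalerA addrC subrK.
  rewrite !scalerN scalerBl scalerA mulrC.
  by rewrite addrACA subrr add0r addrACA subrr addNr addr0.
have := tensor_eq0 forms_s lin1 lin2.
rewrite big_cat !big_cons big_nil /= addr0 !lformN // lformZ //.
by move/eqP; rewrite addr_eq0 => /eqP ->; ring.
Qed.

Lemma rhit_coradical m al c : lform al -> al e = 0 ->
  coradical_le mu e m.+1 c -> coradical_le mu e m (rhit al c).
Proof.
move=> lin_al al_e c_le t lin_t kill_t.
pose t' l := al (head 0 l) * t (behead l).
have lin_t' : multilin_form m.+2 t'.
  move=> [|y l] r /= size_lr; rewrite /t' /=; first exact: lformMr.
  exact/lformMl/(lin_t l r (succn_inj size_lr)).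
have kill_t' : kills_e e m.+2 t'.
  move=> [|y l] r /= size_lr; first by rewrite /t' al_e mul0r.
  by rewrite /t' /= (kill_t l r (succn_inj size_lr)) mulr0.
have := c_le t' lin_t' kill_t'; rewrite (iter_sumSl HC _ lin_t') => <-.
rewrite /rhit (lform_sum _ _ (iter_sum_lform HC lin_t)); apply: eq_bigr => ab _.
by rewrite (lformZ (iter_sum_lform HC lin_t)) -iter_sumMl.
Qed.

Lemma lhit_rhitC x al c : lform x -> lform al -> lhit x (rhit al c) = rhit al (lhit x c).
Proof.
move=> lin_x lin_al; apply: lform_inj => be lin_be.
pose F a := \sum_(ab <- mu a) x ab.2 * be ab.1.
have lin_F : lform F by apply: (comul_lform HC (b := fun a b => x b * be a)) => ?;
  [exact: lformMl | exact: lformMr].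
pose G a := \sum_(ab <- mu a) al ab.1 * be ab.2.
have lin_G : lform G by apply: (comul_lform HC (b := fun a b => al a * be b)) => ?;
  [exact: lformMr | exact: lformMl].
have -> : be (lhit x (rhit al c)) = F (rhit al c).
  by rewrite /lhit lform_sum //; apply: eq_bigr => ab _; rewrite lformZ.
have -> : be (rhit al (lhit x c)) = G (lhit x c).
  by rewrite /rhit lform_sum //; apply: eq_bigr => ab _; rewrite lformZ.
rewrite /rhit /lhit !lform_sum //.
under eq_bigr => ab _ do rewrite lformZ // /F mulr_sumr.
under [RHS]eq_bigr => ab _ do rewrite lformZ // /G mulr_sumr.
transitivity (\sum_(ab <- mu c) \sum_(ab' <- mu ab.2) al ab.1 * (be ab'.1 * x ab'.2)).
  by apply: eq_bigr => ab _; apply: eq_bigr => ab' _; ring.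
rewrite -(coassoc HC (t := fun a b c => al a * (be b * x c))) => [|y z|y z|y z].
- by apply: eq_bigr => ab _; apply: eq_bigr => ab' _; ring.
- exact/lformMr.
- exact/lformMl/lformMr.
- exact/lformMl/lformMl.
Qed.

End Hits.

Section Detection.
Variables (k : fieldType) (C : lmodType k) (mu : C -> seq (C * C)) (eps : C -> k) (e : C).
Hypothesis HC : is_coalgebra mu eps.
Hypothesis He : coaugmentation mu eps e.
Hypothesis Hconil : conilpotent mu e.
Variable s : seq C.
Hypothesis s_H1 : forall c, in_H1 mu e c ->
  exists (lam : k) (a : nat -> k), c = lam *: e + \sum_(i < size s) a i *: s`_i.
Variables (x : nat -> C -> k) (d : nat).
Hypothesis x_lform : forall i, lform (x i).
Hypothesis x_e : forall i, x i e = 0.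
Hypothesis x_detect : forall a : nat -> k,
  (forall i, (i < d)%N -> \sum_(j < size s) a j * x i s`_j = 0) ->
  forall t, lform t -> t e = 0 -> \sum_(j < size s) a j * t s`_j = 0.

Local Notation lhit := (lhit mu).

(* Induction on the coradical degree: each [rhit al c] with [al e = 0] has
   lower degree and, by [lhit_rhitC], is again killed by the [lhit (x i)];
   hence [c] is primitive modulo [e], i.e. lies in [H^1], where the [x i]
   detect every form killing [e]. *)
Lemma lhits_eq0_coradical m c : coradical_le mu e m c ->
  (forall i, (i < d)%N -> lhit (x i) c = 0) -> c = eps c *: e.
Proof.
elim: m c => [|m IHm] c c_le lhits_c.
  apply: (line_e HC He) => t lin_t t_e.
  have := c_le (fun l => t (head 0 l)); rewrite /iter_sum /= big_seq1 => -> //.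
  - by move=> [|y l] r //=; rewrite addSn.
  - by move=> [|y l] r //=; rewrite addSn.
have rhit_c al : lform al -> al e = 0 -> rhit mu al c = al c *: e.
  move=> lin_al al_e; rewrite -(eps_rhit HC c lin_al).
  apply: IHm; first exact: (rhit_coradical HC lin_al al_e c_le).
  by move=> i lt_id; rewrite (lhit_rhitC HC) // lhits_c // (islin0 (rhit_islin HC lin_al)).
have prim_c := comul_primitive HC He rhit_c.
have [|lam [a c_def]] := s_H1 (c := c).
  by move=> B [lin1 lin2] B_e1 B_e2; rewrite /tsum prim_c // !B_e1 B_e2 mulr0 addr0 subrr.
have x_c i : (i < d)%N -> x i c = 0.
  by move=> lt_id; rewrite -(eps_lhit HC c (x_lform i)) lhits_c // (lform0 (eps_lform HC)).
have a_x i : (i < d)%N -> \sum_(j < size s) a j * x i s`_j = 0.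
  move=> lt_id; rewrite -[RHS](x_c i lt_id) c_def lformD // lformZ // x_e mulr0 add0r.
  rewrite lform_sum //.
  by apply: eq_bigr => j _; rewrite lformZ.
apply: (line_e HC He) => t lin_t t_e.
rewrite c_def lformD // lformZ // t_e mulr0 add0r lform_sum // -[RHS](x_detect a_x lin_t t_e).
by apply: eq_bigr => j _; rewrite lformZ.
Qed.

Lemma lhits_eq0 c : (forall i, (i < d)%N -> lhit (x i) c = 0) -> c = eps c *: e.
Proof. by have [m c_le] := Hconil c; apply: lhits_eq0_coradical c_le. Qed.

Lemma lhits_factor (P : lmodType k) (g : C -> P) : islin g -> g e = 0 ->
  exists gs : nat -> C -> P, (forall i, islin (gs i)) /\
    forall c, g c = \sum_(i <- iota 0 d) \sum_(ab <- mu c) x i ab.2 *: gs i ab.1.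
Proof.
move=> lin_g g_e.
pose phi c := [ffun j : 'I_d => lhit (x j) c].
have lin_phi : islin phi.
  by move=> a u v; apply/ffunP => j; rewrite !ffunE (lhit_islin HC (x_lform j)).
have [|h [lin_h hP]] := islin_factor lin_phi lin_g.
  move=> c phi_c; rewrite (@lhits_eq0 c) ?islinZ ?g_e ?scaler0 // => i lt_id.
  by have := congr1 (fun f : {ffun 'I_d -> C} => f (Ordinal lt_id)) phi_c; rewrite !ffunE.
pose place (i : nat) (c : C) : {ffun 'I_d -> C} :=
  [ffun j : 'I_d => if (j : nat) == i then c else 0].
have lin_place i : islin (place i).
  by move=> a u v; apply/ffunP => j; rewrite !ffunE; case: eqP; rewrite ?scaler0 ?addr0.
exists (fun i c => h (place i c)); split=> [i|c]; first exact: islin_comp lin_h (lin_place i).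
rewrite -hP (_ : phi c = \sum_(i <- iota 0 d) place i (lhit (x i) c)); last first.
  apply/ffunP => j; rewrite sum_ffunE ffunE (bigD1_seq (val j)) ?iota_uniq ?mem_iota //=.
  by rewrite ffunE eqxx big1 ?addr0 // => i /negbTE i_neq; rewrite ffunE eq_sym i_neq.
rewrite (islin_sum _ _ lin_h); apply: eq_bigr => i _.
rewrite /lhit (islin_sum _ _ (lin_place i)) (islin_sum _ _ lin_h).
by apply: eq_bigr => ab _; rewrite (islinZ (lin_place i)) (islinZ lin_h).
Qed.

End Detection.

Section ConvolutionAction.
Variables (k : fieldType) (C : lmodType k) (mu : C -> seq (C * C)) (eps : C -> k).
Hypothesis HC : is_coalgebra mu eps.
Variables (M : lmodType k) (pi : (C -> M) -> M).
Hypothesis HM : is_contramodule mu eps pi.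

Lemma conv_islin (x : C -> k) (g : C -> M) : lform x -> islin g ->
  islin (fun c => \sum_(ab <- mu c) x ab.2 *: g ab.1).
Proof.
move=> lin_x lin_g; apply: (comul_islin HC (B := fun a b => x b *: g a)) => [y|z].
- exact: islin_scale.
- exact: islin_smul.
Qed.

Lemma cact_conv (x gs : nat -> C -> k) (d : nat) (psi : C -> k) :
  (forall i, lform (x i)) -> (forall i, lform (gs i)) ->
  psi =1 (fun c => \sum_(i <- iota 0 d) \sum_(ab <- mu c) x i ab.2 * gs i ab.1) ->
  forall m, cact pi psi m = \sum_(i <- iota 0 d) cact pi (x i) (cact pi (gs i) m).
Proof.
move=> x_lform gs_lform psi_def m.
have conv_lform i : lform (fun c => \sum_(ab <- mu c) x i ab.2 * gs i ab.1).
  by apply: (comul_lform HC (b := fun a b => x i b * gs i a)) => ?;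
    [exact: lformMl | exact: lformMr].
rewrite [LHS]/cact (contra_ext HM (g := fun c => \sum_(i <- iota 0 d)
    (\sum_(ab <- mu c) x i ab.2 * gs i ab.1) *: m)); first last.
- by move=> c; rewrite psi_def scaler_suml.
- by apply: islin_bigsum => i; apply: islin_smul.
rewrite (contra_sum HM) => [|i]; last exact: islin_smul.
apply: eq_bigr => i _; have lin_gsm := islin_smul m (gs_lform i).
rewrite [cact pi (gs i) m]/cact -(contra_conv HM (x_lform i) lin_gsm).
apply: (contra_ext HM) => [|c]; last first.
  by rewrite scaler_suml; apply: eq_bigr => ab _; rewrite scalerA.
exact: conv_islin (x_lform i) lin_gsm.
Qed.

Lemma contra_conv_sum (x : nat -> C -> k) (d : nat) (gs : nat -> C -> M)
    (g : C -> M) (m0 : M) :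
  (forall i, lform (x i)) -> (forall i, islin (gs i)) ->
  g =1 (fun c => eps c *: m0 + \sum_(i <- iota 0 d) \sum_(ab <- mu c) x i ab.2 *: gs i ab.1) ->
  pi g = m0 + \sum_(i <- iota 0 d) cact pi (x i) (pi (gs i)).
Proof.
move=> x_lform gs_lin g_def.
have conv_lin i := conv_islin (x_lform i) (gs_lin i).
have lin_unit := islin_smul m0 (eps_lform HC).
rewrite (contra_ext HM _ g_def); last exact/islin_add/islin_bigsum.
rewrite (contraD HM) ?(contra_unit HM) ?(contra_sum HM) //; last exact: islin_bigsum.
by congr (_ + _); apply: eq_bigr => i _; apply: (contra_conv HM).
Qed.

End ConvolutionAction.

Section FullyFaithful.
Variables (k : fieldType) (C : lmodType k) (mu : C -> seq (C * C)) (eps : C -> k) (e : C).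
Hypothesis HC : is_coalgebra mu eps.
Hypothesis He : coaugmentation mu eps e.
Hypothesis Hconil : conilpotent mu e.
Variable R : (C -> k) -> Prop.
Hypothesis R_lform : forall r, R r -> lform r.
Hypothesis R_dense : forall phi, lform phi -> forall sv : seq C,
  exists r, R r /\ forall c, c \in sv -> r c = phi c.
Variables (P Q : lmodType k) (piP : (C -> P) -> P) (piQ : (C -> Q) -> Q).
Hypothesis HP : is_contramodule mu eps piP.
Hypothesis HQ : is_contramodule mu eps piQ.

Lemma contra_morph_Rmod f : contra_morph piP piQ f -> Rmod_morph R piP piQ f.
Proof.
move=> [lin_f f_pi]; split=> [|r Rr p]; first exact: islinD.
rewrite /cact f_pi; last exact: islin_smul (R_lform Rr).
by apply: (contra_ext HQ) => [|c]; [exact: islin_smul (R_lform Rr) | rewrite islinZ].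
Qed.

Section DetectingFamily.
Variables (x : nat -> C -> k) (d : nat).
Hypothesis x_R : forall i, R (x i).
Hypothesis x_e : forall i, x i e = 0.
Hypothesis x_factor : forall (V : lmodType k) (g : C -> V), islin g -> g e = 0 ->
  exists gs : nat -> C -> V, (forall i, islin (gs i)) /\
    forall c, g c = \sum_(i <- iota 0 d) \sum_(ab <- mu c) x i ab.2 *: gs i ab.1.

Let x_lform i : lform (x i) := R_lform (x_R i).

Variable f : P -> Q.
Hypothesis f_R : Rmod_morph R piP piQ f.

Let fD : forall u v, f (u + v) = f u + f v := f_R.1.

Let fB u v : f (u - v) = f u - f v.
Proof.
have f0 : f 0 = 0 by apply: (addrI (f 0)); rewrite -fD !addr0.
by rewrite fD; congr (_ + _); apply/eqP; rewrite -addr_eq0 -fD addNr f0.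
Qed.

Let f_sum (I : Type) (r : seq I) (F : I -> P) :
  f (\sum_(i <- r) F i) = \sum_(i <- r) f (F i).
Proof.
elim: r => [|i r IHr]; last by rewrite !big_cons fD IHr.
by rewrite !big_nil -(subrr 0) fB subrr.
Qed.

(* Nakayama, applied to the defects [f (phi . p) - phi . f p]: every [phi]
   is an element of [R] plus a combination [sum_i x i * gs i]. *)
Lemma Rmod_morph_cact phi : lform phi -> forall p, f (cact piP phi p) = cact piQ phi (f p).
Proof.
move=> lin_phi p; apply/eqP; rewrite -subr_eq0; apply/eqP.
pose S q := exists phi p, lform phi /\ q = f (cact piP phi p) - cact piQ phi (f p).
apply: (contra_nakayama HC He Hconil x_lform x_e HQ (d := d) (S := S)); last by exists phi, p.
move=> {phi lin_phi p} _ [phi [p [lin_phi ->]]].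
have [r [Rr r_e]] := R_dense lin_phi [:: e].
have lin_r := R_lform Rr.
pose psi c := phi c - r c.
have lin_psi : lform psi by move=> a u v; rewrite /psi lin_phi lin_r; ring.
have [|gs [lin_gs gs_psi]] := x_factor (V := k^o) lin_psi.
  by rewrite /psi r_e ?mem_head // subrr.
exists (fun i => f (cact piP (gs i) p) - cact piQ (gs i) (f p)); split.
  by move=> i; exists (gs i), p; split; [exact: lin_gs |].
have split_phi (M : lmodType k) (piM : (C -> M) -> M) : is_contramodule mu eps piM ->
    forall m, cact piM phi m =
      cact piM r m + \sum_(i <- iota 0 d) cact piM (x i) (cact piM (gs i) m).
  move=> HM m; rewrite -(cact_conv HC HM x_lform lin_gs gs_psi) -(cactDl HM) //.
  apply: (contra_ext HM) => [|c]; last by rewrite /psi addrC subrK.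
  by apply: islin_smul => a u v; rewrite lin_r lin_psi; ring.
rewrite !split_phi // fD (proj2 f_R _ Rr) opprD addrACA subrr add0r f_sum -sumrB.
by apply: eq_bigr => i _; rewrite (proj2 f_R _ (x_R i)) -(cactB HQ).
Qed.

Lemma Rmod_morph_islin : islin f.
Proof.
move=> a u v; rewrite fD; congr (_ + _).
have lin_aeps : lform (fun c => a * eps c) by apply/lformMl/(eps_lform HC).
have scale_cact (M : lmodType k) (piM : (C -> M) -> M) : is_contramodule mu eps piM ->
    forall m, cact piM (fun c => a * eps c) m = a *: m.
  move=> HM m; rewrite /cact -[in RHS](contra_unit HM (a *: m)).
  apply: (contra_ext HM) => [|c]; first exact/islin_smul/(eps_lform HC).
  by rewrite !scalerA mulrC.
by rewrite -(scale_cact _ _ HP) Rmod_morph_cact // scale_cact.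
Qed.

(* Nakayama again, now for the defects [f (pi g) - pi (f \o g)]. *)
Lemma Rmod_morph_contra g : islin g -> f (piP g) = piQ (fun c => f (g c)).
Proof.
have lin_f := Rmod_morph_islin.
move=> lin_g; apply/eqP; rewrite -subr_eq0; apply/eqP.
pose S q := exists g, islin g /\ q = f (piP g) - piQ (fun c => f (g c)).
apply: (contra_nakayama HC He Hconil x_lform x_e HQ (d := d) (S := S)); last by exists g.
move=> {g lin_g} _ [g [lin_g ->]].
pose g' c := g c - eps c *: g e.
have lin_g' : islin g'.
  by apply: islin_add => //; rewrite (_ : (fun c => _) = fun c => (-1) *: (eps c *: g e));
    [apply/islin_scale/islin_smul/(eps_lform HC) | apply: funext => c; rewrite scaleN1r].
have [|gs [lin_gs gs_g']] := x_factor lin_g'.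
  by rewrite /g' (eps_e He) scale1r subrr.
exists (fun i => f (piP (gs i)) - piQ (fun c => f (gs i c))); split.
  by move=> i; exists (gs i); split.
rewrite (contra_conv_sum HC HP (d := d) (m0 := g e) x_lform lin_gs); last first.
  by move=> c; rewrite -gs_g' /g' addrC subrK.
rewrite (contra_conv_sum HC HQ (d := d) (gs := fun i c => f (gs i c)) (m0 := f (g e)) x_lform).
- rewrite fD f_sum opprD addrACA subrr add0r -sumrB; apply: eq_bigr => i _.
  by rewrite Rmod_morph_cact // -(cactB HQ).
- by move=> i; apply: islin_comp.
- move=> c; rewrite -[g c](subrK (eps c *: g e)) -/(g' c) gs_g' fD islinZ // addrC.
  congr (_ + _); rewrite f_sum; apply: eq_bigr => i _.
  by rewrite f_sum; apply: eq_bigr => ab _; rewrite islinZ.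
Qed.

End DetectingFamily.

Lemma dense_detecting_family : H1_findim mu e ->
  exists (x : nat -> C -> k) (d : nat),
  [/\ forall i, R (x i), forall i, x i e = 0 &
      forall (V : lmodType k) (g : C -> V), islin g -> g e = 0 ->
      exists gs : nat -> C -> V, (forall i, islin (gs i)) /\
        forall c, g c = \sum_(i <- iota 0 d) \sum_(ab <- mu c) x i ab.2 *: gs i ab.1].
Proof.
move=> [s s_H1]; have [d [y [y_e y_detect]]] := detecting_forms e s.
pose x i := projT1 (cid (R_dense (proj1 (y_e i)) (e :: s))).
have x_y i : R (x i) /\ forall c, c \in e :: s -> x i c = y i c by rewrite /x; case: cid.
have x_e i : x i e = 0 by case: (x_y i) => _ ->; [case: (y_e i) | rewrite mem_head].
exists x, d; split=> // [i|]; first by case: (x_y i).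
apply: (lhits_factor HC He Hconil s_H1 (fun i => R_lform (proj1 (x_y i))) x_e).
move=> a a_x; apply: y_detect => i lt_id; rewrite -[RHS](a_x i lt_id).
by apply: eq_bigr => j _; case: (x_y i) => _ ->; rewrite // inE mem_nth ?orbT.
Qed.

Lemma forget_fully_faithful : H1_findim mu e ->
  forall f, contra_morph piP piQ f <-> Rmod_morph R piP piQ f.
Proof.
move=> HH1 f; split; first exact: contra_morph_Rmod.
have [x [d [x_R x_e x_factor]]] := dense_detecting_family HH1.
move=> f_R; split.
- exact (Rmod_morph_islin x_R x_e x_factor f_R).
- exact (Rmod_morph_contra x_R x_e x_factor f_R).
Qed.

End FullyFaithful.

(* Full faithfulness of a forgetful functor (which is the identity on
   underlying maps, hence automatically faithful) is stated as: a map
   f : P -> Q is a contramodule morphism iff it is a module morphism. *)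
Theorem theorem1p1 (k : fieldType) (C : lmodType k)
    (mu : C -> seq (C * C)) (eps : C -> k) (e : C)
    (HC : is_coalgebra mu eps) (He : coaugmentation mu eps e)
    (Hconil : conilpotent mu e) (HH1 : H1_findim mu e) :
  (forall (P Q : lmodType k) (piP : (C -> P) -> P) (piQ : (C -> Q) -> Q),
      is_contramodule mu eps piP -> is_contramodule mu eps piQ ->
      forall f : P -> Q,
        contra_morph piP piQ f <-> Rmod_morph (@lform k C) piP piQ f)
  /\
  (forall R : (C -> k) -> Prop, dense_subring mu eps R ->
    forall (P Q : lmodType k) (piP : (C -> P) -> P) (piQ : (C -> Q) -> Q),
      is_contramodule mu eps piP -> is_contramodule mu eps piQ ->
      forall f : P -> Q,
        contra_morph piP piQ f <-> Rmod_morph R piP piQ f).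
Proof.
split=> [P Q piP piQ HP HQ|R [R_lform _ _ _ R_dense] P Q piP piQ HP HQ].
  apply: (forget_fully_faithful HC He Hconil _ _ HP HQ HH1) => // phi lin_phi sv.
  by exists phi.
exact: (forget_fully_faithful HC He Hconil R_lform R_dense HP HQ HH1).
Qed.
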